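(* Let $\Omega\subset\mathbb{R}^n$ be a bounded domain, take $\omega=\Omega$, let $m\ge2$, $k\ge1$ be integers, let $y_0\in L^2(\Omega)$ with $y_0\notin\mathcal{S}_m$, and let $\bar a_1,\dots,\bar a_k$ be positive numbers. For each $i\in\{1,\dots,k\}$ put $$T_i=\frac{1}{\lambda_i}\ln\Big(1+\frac{\lambda_i}{\bar a_i}\,|\langle y_0,\xi_i\rangle|\Big).$$ Then Problem $(\mathcal{P})$ with $\{\bar a_i\}_{i=1}^k$ does not have the bang-bang property if either of the following holds: (i) $k\ge m$ and the numbers $T_1,\dots,T_m$ are not all the same; (ii) $k<m$, $\langle y_0,\xi_j\rangle=0$ for all $j=k+1,\dots,m$, and the numbers $T_1,\dots,T_k$ are not all the same.
   Context: Let $\Omega\subset\mathbb{R}^n$ be a bounded domain and $\omega\subset\Omega$ a nonempty open set with characteristic function $\chi_\omega$. Let $\{\xi_i\}_{i\ge1}$ be an orthonormal basis of $L^2(\Omega)$ consisting of eigenfunctions of $-\Delta$ with homogeneous Dirichlet boundary condition, with eigenvalues $0<\lambda_1<\lambda_2\le\lambda_3\le\cdots\to+\infty$; $\langle\cdot,\cdot\rangle$ is the $L^2(\Omega)$ inner product. For $u$ and $y_0\in L^2(\Omega)$, $y(\cdot;u,y_0):\mathbb{R}^+\to L^2(\Omega)$ denotes the solution of $\partial_t y-\Delta y=\chi_\omega u$ in $\Omega\times\mathbb{R}^+$, $y=0$ on $\partial\Omega\times\mathbb{R}^+$, $y(\cdot,0)=y_0$. For a fixed integer $m\ge2$, $\mathcal{S}_m=\mathrm{span}\{\xi_{m+1},\xi_{m+2},\dots\}$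 (closed linear span, i.e. the set of $y$ with $\langle y,\xi_i\rangle=0$ for $i\le m$). The control constraint set is $\mathcal{U}_{\{\bar a_i\}_{i=1}^k}=\{\sum_{i=1}^k\alpha_i(\cdot)\xi_i:\ \alpha_i \text{ measurable from }\mathbb{R}^+\text{ to }[-\bar a_i,\bar a_i]\}$. Problem $(\mathcal{P})$ with $\{\bar a_i\}_{i=1}^k$: $\inf\{t\ge0: y(t;u,y_0)\in\mathcal{S}_m\}$ over $u\in\mathcal{U}_{\{\bar a_i\}_{i=1}^k}$; the infimum $t^*$ is the optimal time and an admissible $u^*$ with $y(t^*;u^*,y_0)\in\mathcal{S}_m$ is an optimal control. The problem has the bang-bang property if every optimal control $u^*=\sum_{i=1}^k\alpha_i^*\xi_i$ satisfies, for each $i$, $|\alpha_i^*(t)|=\bar a_i$ for almost every $t\in(0,t^* )$. *)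

(* The state space L^2(Omega) is represented through
   its (isometric) coordinates in the orthonormal eigenbasis {xi_i}_{i>=1}:
   y is identified with the sequence i |-> <y, xi_i> (indices start at 1;
   index 0 is unused). *)
From HB Require Import structures.
From mathcomp Require Import all_boot all_order all_algebra.
From mathcomp Require Import all_classical all_reals all_analysis.
Set Implicit Arguments. Unset Strict Implicit. Unset Printing Implicit Defensive.
Import Order.TTheory GRing.Theory Num.Theory.
Import numFieldNormedType.Exports.
Local Open Scope classical_set_scope.
Local Open Scope ring_scope.

Section Heat.
Variable R : realType.

Definition in_Sm (m : nat) (y : nat -> R) : Prop :=
  forall i : nat, (1 <= i <= m)%N -> y i = 0.

(* u = \sum_{i=1}^k alpha_i xi_i, alpha_i measurable R^+ -> [-abar_i, abar_i] *)
Definition admissible (k : nat) (abar : nat -> R) (alpha : nat -> R -> R) : Prop :=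
  forall i : nat, (1 <= i <= k)%N ->
    measurable_fun (`[0%R, +oo[ : set R) (alpha i) /\
    (forall t : R, 0 <= t -> `|alpha i t| <= abar i).

(* <y(t; u, y0), xi_i> for the heat equation with omega = Omega (mild solution,
   Duhamel formula in the eigenbasis); c i = <y0, xi_i>. *)
Definition sol_coord (lam c : nat -> R) (k : nat) (alpha : nat -> R -> R)
    (i : nat) (t : R) : R :=
  expR (- (lam i * t)) * c i +
  (if (1 <= i <= k)%N then
     Rintegral (@lebesgue_measure R) `[0%R, t]
       (fun s => expR (- (lam i * (t - s))) * alpha i s)
   else 0).

Definition reach_set (lam c : nat -> R) (m k : nat) (abar : nat -> R) : set R :=
  [set t | 0 <= t /\ exists alpha, admissible k abar alpha /\
                      in_Sm m (fun i => sol_coord lam c k alpha i t)].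

Definition optimal_time (lam c : nat -> R) (m k : nat) (abar : nat -> R) : R :=
  inf (reach_set lam c m k abar).

Definition optimal_control (lam c : nat -> R) (m k : nat) (abar : nat -> R)
    (alpha : nat -> R -> R) : Prop :=
  admissible k abar alpha /\
  in_Sm m (fun i => sol_coord lam c k alpha i (optimal_time lam c m k abar)).

Definition bang_bang (lam c : nat -> R) (m k : nat) (abar : nat -> R) : Prop :=
  forall alpha, optimal_control lam c m k abar alpha ->
    forall i : nat, (1 <= i <= k)%N ->
      {ae (@lebesgue_measure R), forall t : R,
         (0 < t < optimal_time lam c m k abar) -> `|alpha i t| = abar i}.

Definition Ti (lam c abar : nat -> R) (i : nat) : R :=
  (lam i)^-1 * ln (1 + lam i / abar i * `|c i|).

End Heat.

From HB Require Import structures.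
From mathcomp Require Import all_boot all_order all_algebra.
From mathcomp Require Import all_classical all_reals all_analysis.
From mathcomp Require Import ring lra zify.
Set Implicit Arguments. Unset Strict Implicit. Unset Printing Implicit Defensive.
Import Order.TTheory GRing.Theory Num.Theory.
Import numFieldNormedType.Exports.
Local Open Scope classical_set_scope.
Local Open Scope ring_scope.

(** Since [omega = Omega] and the controls live in span{xi_1..xi_k}, the
    problem decouples into scalar equations [y_i' + lam_i y_i = alpha_i] with
    [|alpha_i| <= abar_i].  The i-th one can be driven from [c_i] to [0] in time
    [T_i] and no sooner, by the bang control [-sg(c_i) abar_i] which is switched
    off at [T_i].  Under either hypothesis only the modes [i <= min(m,k)] must be
    steered to [0], so the optimal time is [T_max = max T_i] and the family of these
    controls is optimal.  A mode [j] with [T_j < T_max] has a control vanishing on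
    [(T_j, T_max)], a set of positive measure, so this optimal control is not
    bang-bang. *)

Section ExponentialIntegrals.
Variable R : realType.
Local Notation mu := (@lebesgue_measure R).

Lemma is_derive_expRM (l z : R) :
  is_derive z 1 (fun x => expR (l * x)) (expR (l * z) * l).
Proof.
have dlin : is_derive z 1 (fun x : R => l * x) l.
  have := @is_deriveZ R R R (fun x => x) l z 1 1 (is_derive_id _ _).
  by rewrite /GRing.scale /= mulr1.
exact: (is_derive1_comp (is_derive_expR _) dlin).
Qed.

Lemma continuous_expRM (l : R) : continuous (fun x : R => expR (l * x)).
Proof.
move=> z; apply: continuous_comp; last exact: continuous_expR.
by apply: continuousM => //; exact: cst_continuous.
Qed.

Lemma Rintegral_expRM (l a b : R) : 0 < l -> a <= b ->
  Rintegral mu `[a, b] (fun x => expR (l * x)) = (expR (l * b) - expR (l * a)) / l.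
Proof.
move=> l0; rewrite le_eqVlt => /predU1P[<-|ab].
  by rewrite set_itv1 Rintegral_set1 subrr mul0r.
pose F x := l^-1 * expR (l * x).
have dF (z : R) : is_derive z (1 : R) F (l^-1 *: (expR (l * z) * l)).
  by apply: is_deriveZ; exact: is_derive_expRM.
have cF : continuous F.
  move=> z; have := @continuousM R R (fun=> l^-1) (fun x => expR (l * x)) z
    (@cst_continuous _ _ l^-1 z) (@continuous_expRM l z); exact.
rewrite /Rintegral (@continuous_FTC2 _ _ F) //.
- by rewrite -EFinB /= -mulrBr mulrC.
- exact: continuous_subspaceT (@continuous_expRM l).
- split.
  + by move=> y _; exact: (@ex_derive _ _ _ _ _ _ _ (dF y)).
  + by apply/cvg_at_right_filter; exact: cF.
  + by apply/cvg_at_left_filter; exact: cF.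
- move=> z _; rewrite derive1E (@derive_val _ _ _ _ _ _ _ (dF z)).
  by rewrite /GRing.scale /= mulrC mulfK // gt_eqF.
Qed.

Lemma integrable_expRM (l t : R) :
  mu.-integrable `[0%R, t] (EFin \o (fun s => expR (l * s))).
Proof.
apply: continuous_compact_integrable; first exact: segment_compact.
exact: continuous_subspaceT (@continuous_expRM l).
Qed.

Lemma integrable_expRM_bounded (l t M : R) (g : R -> R) :
  measurable_fun (`[0%R, +oo[ : set R) g -> (forall s, 0 <= s -> `|g s| <= M) ->
  mu.-integrable `[0%R, t] (EFin \o (fun s => expR (l * s) * g s)).
Proof.
move=> mg gM; apply: measurable_bounded_integrable => //.
- apply: le_lt_trans (lexx (mu `[0%R, t])) _.
  by rewrite lebesgue_measure_itv /=; case: ifP => _; rewrite ?ltry // -EFinB ltry.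
- apply: measurable_realfun.measurable_funM.
  + exact: measurable_funS
      (measurable_realfun.continuous_measurable_fun (@continuous_expRM l)).
  + apply: measurable_funS mg => // x /=.
    by rewrite !in_itv /= => /andP[-> _].
- exists (expR (`|l| * `|t|) * M); split; first exact: num_real.
  move=> x Kx y /=; rewrite in_itv /= => /andP[y0 yt].
  apply: le_trans (ltW Kx).
  rewrite normrM ger0_norm ?expR_ge0 //.
  apply: ler_pM; [exact: expR_ge0 | exact: normr_ge0 | | exact: gM].
  rewrite ler_expR; apply: le_trans (ler_norm _) _.
  by rewrite normrM ler_wpM2l // ger0_norm // (le_trans yt (ler_norm t)).
Qed.

Lemma Duhamel_factor (l t cc : R) (g : R -> R) :
  mu.-integrable `[0%R, t] (EFin \o (fun s => expR (l * s) * g s)) ->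
  expR (- (l * t)) * cc +
    Rintegral mu `[0%R, t] (fun s => expR (- (l * (t - s))) * g s) =
  expR (- (l * t)) * (cc + Rintegral mu `[0%R, t] (fun s => expR (l * s) * g s)).
Proof.
move=> ig.
rewrite (@eq_Rintegral _ _ _ mu _ (fun s => expR (- (l * t)) * (expR (l * s) * g s))).
  by rewrite RintegralZl // mulrDr.
by move=> s _; rewrite mulrA -expRD; congr (expR _ * _); ring.
Qed.

Lemma normr_Rintegral_expRM_le (l t M : R) (g : R -> R) : 0 < l -> 0 <= t ->
  measurable_fun (`[0%R, +oo[ : set R) g -> (forall s, 0 <= s -> `|g s| <= M) ->
  `|Rintegral mu `[0%R, t] (fun s => expR (l * s) * g s)| <= M * (expR (l * t) - 1) / l.
Proof.
move=> l0 t0 mg gM.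
have ig := integrable_expRM_bounded l t mg gM.
have iM : mu.-integrable `[0%R, t] (EFin \o (fun s => expR (l * s) * M)).
  by apply: (@integrable_expRM_bounded _ _ `|M|) => //; exact: measurable_cst.
apply: le_trans (le_normr_Rintegral _ ig) _ => //.
apply: le_trans (@le_Rintegral _ _ _ mu _ _ (fun s => expR (l * s) * M) _ _ iM _) _ => //.
- exact: integrable_norm ig.
- move=> s /=; rewrite in_itv /= => /andP[s0 _].
  rewrite normrM ger0_norm ?expR_ge0 //.
  by apply: ler_wpM2l; [exact: expR_ge0 | exact: gM].
rewrite RintegralZr //; last exact: integrable_expRM.
by rewrite Rintegral_expRM // mulr0 expR0 mulrC mulrA.
Qed.

End ExponentialIntegrals.

Section ScalarNullControl.
Variable R : realType.
Local Notation mu := (@lebesgue_measure R).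
Variables (l ab : R).
Hypotheses (l0 : 0 < l) (ab0 : 0 < ab).

Definition null_time (cc : R) : R := l^-1 * ln (1 + l / ab * `|cc|).

Definition bang_control (cc T : R) (s : R) : R :=
  - (Num.sg cc * ab) * \1_(`]-oo, T]) s.

Let null_time_arg_ge1 (cc : R) : 1 <= 1 + l / ab * `|cc|.
Proof. by rewrite lerDl mulr_ge0 // divr_ge0 // ltW. Qed.

Lemma null_time_ge0 (cc : R) : 0 <= null_time cc.
Proof. by apply: mulr_ge0; [rewrite invr_ge0 ltW | exact: ln_ge0]. Qed.

Lemma measurable_bang_control (cc T : R) :
  measurable_fun (`[0%R, +oo[ : set R) (bang_control cc T).
Proof.
apply: measurable_realfun.measurable_funM; first exact: measurable_cst.
exact: measurable_realfun.measurable_indic.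
Qed.

Lemma normr_bang_control_le (cc T s : R) : `|bang_control cc T s| <= ab.
Proof.
rewrite normrM normrN normrM (gtr0_norm ab0) -[leRHS]mulr1.
have sg1 : `|Num.sg cc| <= 1 by rewrite normr_sg; case: (_ != 0).
have ind1 : `|\1_(`]-oo, T]) s : R| <= 1.
  by rewrite indicE; case: (_ \in _); rewrite ?normr1 ?normr0.
apply: ler_pM => //; first by rewrite mulr_ge0 // ltW.
by rewrite -[leRHS]mul1r ler_wpM2r // ltW.
Qed.

Lemma bang_control_reaches0 (cc t : R) : null_time cc <= t ->
  expR (- (l * t)) * cc + Rintegral mu `[0%R, t]
    (fun s => expR (- (l * (t - s))) * bang_control cc (null_time cc) s) = 0.
Proof.
set T := null_time cc => Tt.
have ig := integrable_expRM_bounded l t (measurable_bang_control cc T)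
  (fun s _ => normr_bang_control_le cc T s).
rewrite (Duhamel_factor _ ig).
have T0 : 0 <= T := null_time_ge0 cc.
have := Rintegral_itvB ig (x := T); rewrite !bnd_simp => /(_ T0 Tt) split_at_T.
have -> : Rintegral mu `[0%R, t] (fun s => expR (l * s) * bang_control cc T s) =
          Rintegral mu `[0%R, T] (fun s => expR (l * s) * bang_control cc T s).
  apply/eqP; rewrite -subr_eq0 split_at_T.
  rewrite (@eq_Rintegral _ _ _ mu _ (fun=> 0)) ?Rintegral_cst ?mul0r //.
  move=> s; rewrite inE /= in_itv /= => /andP[Ts _].
  rewrite /bang_control indicE memNset ?mulr0 //= in_itv /=.
  by apply/negP; rewrite -ltNge.
rewrite (@eq_Rintegral _ _ _ mu _ (fun s => - (Num.sg cc * ab) * expR (l * s))).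
  rewrite RintegralZl ?integrable_expRM // Rintegral_expRM // mulr0 expR0.
  rewrite /T /null_time mulVKf ?gt_eqF // lnK ?posrE ?(lt_le_trans ltr01) //.
  rewrite {1}(numEsg cc) addrAC subrr add0r.
  apply/eqP; rewrite mulf_eq0; apply/orP; right; apply/eqP.
  by field; rewrite ?gt_eqF.
move=> s; rewrite inE /= in_itv /= => /andP[_ sT].
by rewrite /bang_control indicE mem_set ?mulr1 1?mulrC //= in_itv /= sT.
Qed.

(** Reaching [0] needs [|cc| <= ab (e^{l t} - 1) / l], i.e. [t >= null_time cc]. *)
Lemma null_time_le (cc t : R) (g : R -> R) : 0 <= t ->
  measurable_fun (`[0%R, +oo[ : set R) g -> (forall s, 0 <= s -> `|g s| <= ab) ->
  expR (- (l * t)) * cc +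
    Rintegral mu `[0%R, t] (fun s => expR (- (l * (t - s))) * g s) = 0 ->
  null_time cc <= t.
Proof.
move=> t0 mg gM.
rewrite (Duhamel_factor _ (integrable_expRM_bounded l t mg gM)).
move/eqP; rewrite mulf_eq0 expR_eq0 /= addr_eq0 => /eqP ccE.
have bound := normr_Rintegral_expRM_le l0 t0 mg gM.
rewrite -normrN -ccE in bound.
rewrite /null_time ler_pdivrMl // -ler_expR lnK ?posrE ?(lt_le_trans ltr01) //.
have : l / ab * `|cc| <= l / ab * (ab * (expR (l * t) - 1) / l).
  by apply: ler_wpM2l => //; rewrite divr_ge0 // ltW.
have -> : l / ab * (ab * (expR (l * t) - 1) / l) = expR (l * t) - 1.
  by field; rewrite ?gt_eqF.
lra.
Qed.

End ScalarNullControl.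

Lemma exists_argmax_lt (R : realType) (f : nat -> R) (n i j : nat) :
  (1 <= i <= n)%N -> (1 <= j <= n)%N -> f i <> f j ->
  exists i0 j0, [/\ (1 <= i0 <= n)%N, (1 <= j0 <= n)%N,
    (forall l, (1 <= l <= n)%N -> f l <= f i0) & f j0 < f i0].
Proof.
move=> hi hj fij.
have [i0 [hi0 fmax]] : exists i0, (1 <= i0 <= n)%N /\
    forall l, (1 <= l <= n)%N -> f l <= f i0.
  have : (1 <= n)%N by lia.
  elim: n {hi hj} => [//|[|n] IH] _.
    by exists 1%N; split => // l hl; have -> : l = 1%N by lia.
  have [i0 [hi0 fmax]] := IH isT.
  have [le|lt] := leP (f n.+2) (f i0).
  - exists i0; split; first lia.
    by move=> l hl; have [/fmax|->] : (1 <= l <= n.+1)%N \/ l = n.+2 by lia.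
  - exists n.+2; split; first lia.
    move=> l hl; have [hl'|->] : (1 <= l <= n.+1)%N \/ l = n.+2 by lia.
    + exact: le_trans (fmax l hl') (ltW lt).
    + exact: lexx.
have [fi|] := ltrP (f i) (f i0); first by exists i0, i.
have [fj|] := ltrP (f j) (f i0); first by exists i0, j.
move=> fj fi; exfalso; apply: fij.
by apply/eqP; rewrite eq_le (le_trans (fmax i hi) fj) (le_trans (fmax j hj) fi).
Qed.

Section HeatTimeOptimalControl.
Variable R : realType.
Variables (lam c abar : nat -> R) (m k : nat).
Hypotheses (hlam : forall i, (1 <= i <= k)%N -> 0 < lam i)
           (habar : forall i, (1 <= i <= k)%N -> 0 < abar i).

Local Notation T := (Ti lam c abar).

Definition bang_controls (i : nat) : R -> R :=
  bang_control (abar i) (c i) (T i).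

Lemma admissible_bang_controls : admissible k abar bang_controls.
Proof.
move=> i hi; split; first exact: measurable_bang_control.
by move=> t _; apply: normr_bang_control_le; exact: habar.
Qed.

Lemma sol_coord_bang_controls_eq0 (i : nat) (t : R) : (1 <= i <= k)%N ->
  T i <= t -> sol_coord lam c k bang_controls i t = 0.
Proof.
by move=> hi Tt; rewrite /sol_coord hi; apply: bang_control_reaches0; auto.
Qed.

Lemma Ti_le_sol_coord_eq0 (alpha : nat -> R -> R) (i : nat) (t : R) :
  admissible k abar alpha -> (1 <= i <= k)%N -> 0 <= t ->
  sol_coord lam c k alpha i t = 0 -> T i <= t.
Proof.
move=> adm hi t0; rewrite /sol_coord hi.
have [ma ba] := adm i hi.
exact: (null_time_le (hlam hi) (habar hi) t0 ma ba).
Qed.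

(** Modes [j > k] are uncontrolled, so [c_j = 0] is needed for them. *)
Lemma optimal_time_bang_controls (i0 : nat) :
  (1 <= i0 <= minn m k)%N ->
  (forall i, (1 <= i <= minn m k)%N -> T i <= T i0) ->
  (forall j, (minn m k < j <= m)%N -> c j = 0) ->
  optimal_time lam c m k abar = T i0 /\ optimal_control lam c m k abar bang_controls.
Proof.
move=> hi0 Tmax c0.
have hi0k : (1 <= i0 <= k)%N by lia.
have steered : in_Sm m (fun i => sol_coord lam c k bang_controls i (T i0)).
  move=> i hi; have [hik|hki] := leqP i k.
  - by apply: sol_coord_bang_controls_eq0; [lia | apply: Tmax; lia].
  - rewrite /sol_coord (_ : (1 <= i <= k)%N = false); last lia.
    by rewrite c0 ?mulr0 ?addr0 //; lia.
have T0 : 0 <= T i0 by apply: null_time_ge0; auto.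
have opt : optimal_time lam c m k abar = T i0.
  apply/eqP; rewrite eq_le; apply/andP; split.
  - apply: ge_inf; first by exists 0 => y [].
    by split => //; exists bang_controls; split => //; exact: admissible_bang_controls.
  - apply: lb_le_inf; first by exists (T i0); split => //; exists bang_controls;
      split => //; exact: admissible_bang_controls.
    move=> t [t0 [alpha [adm reach]]].
    by apply: (Ti_le_sol_coord_eq0 adm hi0k t0); apply: reach; lia.
split=> //; split; first exact: admissible_bang_controls.
by rewrite opt.
Qed.

Lemma not_bang_bang_bang_controls (j : nat) : (1 <= j <= k)%N ->
  T j < optimal_time lam c m k abar ->
  optimal_control lam c m k abar bang_controls -> ~ bang_bang lam c m k abar.
Proof.
move=> hj Tj_lt opt bb; have [A [mA A0 sub]] := bb _ opt j hj.
have gap : `]T j, optimal_time lam c m k abar[ `<=` A.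
  move=> x /=; rewrite in_itv /= => /andP[Tx xT]; apply: sub => /= full.
  have x0 : 0 < x by apply: le_lt_trans Tx; apply: null_time_ge0; auto.
  have := full; rewrite x0 xT /bang_controls /bang_control indicE memNset; last first.
    by rewrite /= in_itv /=; apply/negP; rewrite -ltNge.
  by rewrite mulr0 normr0 => /(_ isT) /esym /eqP; rewrite gt_eqF ?habar.
have : (lebesgue_measure `]T j, optimal_time lam c m k abar[ <= lebesgue_measure A)%E.
  exact: (le_measure lebesgue_measure (mem_set (measurable_itv _)) (mem_set mA) gap).
rewrite A0 lebesgue_measure_itv /= lte_fin Tj_lt -EFinD lee_fin.
by rewrite subr_le0 leNgt Tj_lt.
Qed.

End HeatTimeOptimalControl.

Unset Implicit Arguments.
Set Strict Implicit.

Theorem theorem2p2 (R : realType) (lam : nat -> R) (c : nat -> R)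
  (m k : nat) (abar : nat -> R)
  (hlam_pos : forall i : nat, (1 <= i)%N -> 0 < lam i)
  (hlam12 : lam 1%N < lam 2%N)
  (hlam_mono : forall i : nat, (1 <= i)%N -> lam i <= lam i.+1)
  (hlam_inf : lam @ \oo --> +oo)
  (hc : cvg (series (fun i => c i ^+ 2) @ \oo))
  (hm : (2 <= m)%N) (hk : (1 <= k)%N)
  (hy0 : ~ in_Sm m c)
  (habar : forall i : nat, (1 <= i <= k)%N -> 0 < abar i) :
  (((m <= k)%N /\
     exists i j : nat, (1 <= i <= m)%N /\ (1 <= j <= m)%N /\
                       Ti lam c abar i <> Ti lam c abar j)
   \/
   ((k < m)%N /\ (forall j : nat, (k < j <= m)%N -> c j = 0) /\
     exists i j : nat, (1 <= i <= k)%N /\ (1 <= j <= k)%N /\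
                       Ti lam c abar i <> Ti lam c abar j)) ->
  ~ bang_bang lam c m k abar.
Proof.
move=> H.
(* Both alternatives are the case [N = minn m k] of the same condition. *)
have [c0 [i [j [hi [hj Tij]]]]] : (forall j, (minn m k < j <= m)%N -> c j = 0) /\
    exists i j, (1 <= i <= minn m k)%N /\ (1 <= j <= minn m k)%N /\
      Ti lam c abar i <> Ti lam c abar j.
  case: H => [[hmk [i [j [hi [hj Tij]]]]] | [hkm [c0 [i [j [hi [hj Tij]]]]]]].
  - by split=> [l hl|]; [lia | exists i, j; split; [lia | split; [lia | done]]].
  - by split=> [l hl|]; [apply: c0; lia | exists i, j; split; [lia | split; [lia | done]]].
have hlam n : (1 <= n <= k)%N -> 0 < lam n by move=> /andP[/hlam_pos].
have [i0 [j0 [hi0 hj0 Tmax Tlt]]] := exists_argmax_lt hi hj Tij.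
have [opt_time opt_ctrl] := optimal_time_bang_controls hlam habar hi0 Tmax c0.
apply: (not_bang_bang_bang_controls hlam habar (j := j0)) opt_ctrl; first lia.
by rewrite opt_time.
Qed.
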